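(* Let $R$ be an invariant Bezout domain which is a ring of simple range 2. Then $R$ is a D-K elementary divisor ring.
   Context: All rings are associative with nonzero identity. A Bezout domain is a domain in which every finitely generated right ideal and every finitely generated left ideal is principal. A nonzero element $a$ is invariant if $aR=Ra$; a domain is invariant if every nonzero element is invariant. For $x\in R$, $RxR$ denotes the two-sided ideal generated by $x$. A ring $R$ is called a ring of simple range 2 if for all $a,b,c\in R$ with $c\neq 0$ and $RaR+RbR+RcR=R$ there exist $p,q\in R$ such that $R(pa+qb)R+RpcR=R$. Two matrices $A,B$ over $R$ are equivalent if $B=PAQ$ for invertible $P,Q$. $R$ is a D-K elementary divisor ring if every (rectangular) matrix over $R$ is equivalent to a matrix $\mathrm{diag}(\varepsilon_1,\dots,\varepsilon_r,0,\dots,0)$ such that $R\varepsilon_{i+1}R\subseteq \varepsilon_iR\cap R\varepsilon_i$ for $i=1,\dots,r-1$ and $\varepsilon_1,\dots,\varepsilon_{r-1}$ are invariant elements. *)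

From HB Require Import structures.
From mathcomp Require Import all_boot all_order all_algebra.
Set Implicit Arguments. Unset Strict Implicit. Unset Printing Implicit Defensive.
Import GRing.Theory.
Local Open Scope ring_scope.

Section Defs.
Variable R : nzRingType.

(* R has no zero divisors (R is nontrivial by nzRingType) *)
Definition is_domain : Prop := forall a b : R, a * b = 0 -> a = 0 \/ b = 0.

Definition in_rideal (s : seq R) (x : R) : Prop :=
  exists f : 'I_(size s) -> R, x = \sum_(i < size s) s`_i * f i.
Definition in_lideal (s : seq R) (x : R) : Prop :=
  exists f : 'I_(size s) -> R, x = \sum_(i < size s) f i * s`_i.
Definition in_ideal2 (s : seq R) (x : R) : Prop :=
  exists (n : nat) (u v : 'I_n -> R) (k : 'I_n -> 'I_(size s)),
    x = \sum_(i < n) u i * s`_(k i) * v i.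

Definition bezout : Prop :=
  (forall s : seq R, exists d : R, forall x, in_rideal s x <-> exists r, x = d * r) /\
  (forall s : seq R, exists d : R, forall x, in_lideal s x <-> exists r, x = r * d).

Definition invariant_elt (a : R) : Prop :=
  a != 0 /\ (forall r, exists r', a * r = r' * a) /\ (forall r, exists r', r * a = a * r').

Definition invariant_ring : Prop := forall a : R, a != 0 -> invariant_elt a.

Definition simple_range2 : Prop :=
  forall a b c : R, c != 0 -> (forall x, in_ideal2 [:: a; b; c] x) ->
    exists p q : R, forall x, in_ideal2 [:: p * a + q * b; p * c] x.

Definition invertible_mx (n : nat) (P : 'M[R]_n) : Prop :=
  exists P' : 'M[R]_n, P *m P' = 1%:M /\ P' *m P = 1%:M.

(* D-K elementary divisor ring; eps is 0-indexed: eps 0, ..., eps (r-1) *)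
Definition DK_elementary_divisor_ring : Prop :=
  forall (m n : nat) (A : 'M[R]_(m, n)),
    exists (P : 'M[R]_m) (Q : 'M[R]_n) (r : nat) (eps : nat -> R),
      [/\ invertible_mx P, invertible_mx Q, (r <= minn m n)%N &
      [/\
        (forall (i : 'I_m) (j : 'I_n),
            (P *m A *m Q) i j = if ((i : nat) == j) && (i < r)%N then eps i else 0),
        (forall i, (i < r)%N -> eps i != 0),
        (forall i, (i.+1 < r)%N -> forall x, in_ideal2 [:: eps i.+1] x ->
             (exists y, x = eps i * y) /\ (exists y, x = y * eps i)) &
        (forall i, (i.+1 < r)%N -> invariant_elt (eps i))]].
End Defs.

From HB Require Import structures.
From mathcomp Require Import all_boot all_order all_algebra.
From Stdlib Require Ncring Ncring_tac.
Set Implicit Arguments. Unset Strict Implicit. Unset Printing Implicit Defensive.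
Import GRing.Theory.
Local Open Scope ring_scope.

(* Over an invariant domain left and right divisibility agree, so the Smith
   reduction goes through as in the commutative case. Bezout clears a column
   below its top entry; by induction on the number of columns a matrix becomes
   equivalent to one with first row [(a, c, 0, ..., 0)], first column
   [(a, b, 0, ..., 0)], a zero below [c], and [c] dividing every entry outside
   the first column. On this corner simple range 2 produces invertible matrices
   whose effect is to put a right gcd [d] of [a], [b], [c] in the corner; [d] then
   divides every entry, and clearing the first row and column lets the induction
   proceed on the remaining block. *)

#[global] Instance nzRing_Ncring_ops (R : nzRingType) :
  @Ncring.Ring_ops R 0 1 +%R *%R (fun x y => x - y) -%R eq := {}.

#[global] Instance nzRing_Ncring (R : nzRingType) :
  @Ncring.Ring R 0 1 +%R *%R (fun x y => x - y) -%R eq (nzRing_Ncring_ops R).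
Proof.
constructor=> //; rewrite /Algebra_syntax.equality /Algebra_syntax.addition
  /Algebra_syntax.multiplication /Algebra_syntax.subtraction /Algebra_syntax.opposite
  /Algebra_syntax.zero /Algebra_syntax.one /Ncring.eq_notation /Ncring.add_notation
  /Ncring.mul_notation /Ncring.sub_notation /Ncring.opp_notation /Ncring.zero_notation
  /Ncring.one_notation.
all: try first [ exact: RelationClasses.eq_equivalence | by move=> ? ? -> ? ? ->
               | by move=> ? ? -> ].
- exact: add0r.
- exact: addrC.
- exact: addrA.
- exact: mul1r.
- exact: mulr1.
- exact: mulrA.
- exact: mulrDl.
- by move=> *; rewrite mulrDr.
- exact: subrr.
Qed.

Ltac nc_ring := Ncring_tac.non_commutative_ring.

(* [inv2 a b c d a' b' c' d']: the matrices [[a, b], [c, d]] and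
   [[a', b'], [c', d']] are inverse to each other. *)
Definition inv2 (R : nzRingType) (a b c d a' b' c' d' : R) :=
  [/\ a * a' + b * c' = 1, a * b' + b * d' = 0, c * a' + d * c' = 0 & c * b' + d * d' = 1] /\
  [/\ a' * a + b' * c = 1, a' * b + b' * d = 0, c' * a + d' * c = 0 & c' * b + d' * d = 1].

Definition invertible2 (R : nzRingType) (a b c d : R) :=
  exists a' b' c' d', inv2 a b c d a' b' c' d'.

Lemma inv2_sym (R : nzRingType) (a b c d a' b' c' d' : R) :
  inv2 a b c d a' b' c' d' -> inv2 a' b' c' d' a b c d.
Proof. by case. Qed.

Definition rbezout2 (R : nzRingType) := forall a b : R, exists g x y a' b',
  [/\ g = a * x + b * y, a = g * a' & b = g * b'].

Lemma is_domain_conv (R : nzRingType) : is_domain R -> is_domain R^c.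
Proof. by move=> R_dom x y /R_dom []; [right | left]. Qed.

Lemma bezout_conv (R : nzRingType) : bezout R -> bezout R^c.
Proof. by case=> Hr Hl; split; [exact: Hl | exact: Hr]. Qed.

Lemma sum_ord2 (R : nzRingType) (F : 'I_2 -> R) :
  \sum_(i < 2) F i = F ord0 + F (lift ord0 ord0).
Proof. by rewrite !big_ord_recl big_ord0 addr0. Qed.

Lemma bezout_rbezout2 (R : nzRingType) : bezout R -> rbezout2 R.
Proof.
move=> [R_bez _] a b; have [g gP] := R_bez [:: a; b].
have [f gE] : in_rideal [:: a; b] g by apply/gP; exists 1; rewrite mulr1.
have [a' aE] : exists r, a = g * r.
  apply/gP; exists (fun i : 'I_2 => if i == ord0 then 1 else 0).
  by rewrite sum_ord2 /= mulr1 mulr0 addr0.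
have [b' bE] : exists r, b = g * r.
  apply/gP; exists (fun i : 'I_2 => if i == ord0 then 0 else 1).
  by rewrite sum_ord2 /= mulr1 mulr0 add0r.
by exists g, (f ord0), (f (lift ord0 ord0)), a', b'; split; rewrite // gE sum_ord2.
Qed.

Section Domain.
Variable R : nzRingType.
Hypothesis R_dom : is_domain R.

Lemma dom_mulrI (a x y : R) : a != 0 -> a * x = a * y -> x = y.
Proof.
move=> an0 e; have: a * (x - y) = 0 by rewrite mulrBr e subrr.
by case/R_dom => [/eqP | /eqP]; rewrite ?(negPf an0) ?subr_eq0 => // /eqP.
Qed.

Lemma dom_mulIr (a x y : R) : a != 0 -> x * a = y * a -> x = y.
Proof.
move=> an0 e; have: (x - y) * a = 0 by rewrite mulrBl e subrr.
by case/R_dom => [/eqP | /eqP]; rewrite ?(negPf an0) ?subr_eq0 => // /eqP.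
Qed.

Lemma dom_mulr1C (a b : R) : a * b = 1 -> b * a = 1.
Proof.
move=> ab1; have an0 : a != 0 by apply: contra_eq_neq ab1 => ->; rewrite mul0r eq_sym oner_neq0.
by apply: (dom_mulrI an0); rewrite mulrA ab1 mul1r mulr1.
Qed.

(* With [A = [[a, b], [c, d]]] and [B = [[a', b'], [c', d']]], [N := B A - 1]
   has zero second row, hence [N B = 0] and [N^2 = - N]; the corner [m1] of [N]
   is then [0] or [-1], and [-1] would make the rows of [B] proportional. *)
Lemma inv2_of_mulr1 (a b c d a' b' c' d' : R) :
  [/\ a * a' + b * c' = 1, a * b' + b * d' = 0, c * a' + d * c' = 0 & c * b' + d * d' = 1] ->
  c' * a + d' * c = 0 -> c' * b + d' * d = 1 -> inv2 a b c d a' b' c' d'.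
Proof.
move=> [AB1 AB2 AB3 AB4] BA3 BA4.
set m1 := a' * a + b' * c - 1; set m2 := a' * b + b' * d.
have NB1 : m1 * a' + m2 * c' = 0.
  have -> : m1 * a' + m2 * c' = a' * (a * a' + b * c') - a' + b' * (c * a' + d * c').
    by rewrite /m1 /m2; nc_ring.
  by rewrite AB1 AB3 mulr1 subrr mulr0 addr0.
have NB2 : m1 * b' + m2 * d' = 0.
  have -> : m1 * b' + m2 * d' = a' * (a * b' + b * d') + b' * (c * b' + d * d') - b'.
    by rewrite /m1 /m2; nc_ring.
  by rewrite AB2 AB4 mulr0 mulr1 add0r subrr.
have N2 : m1 * (m1 + 1) = 0.
  have -> : m1 * (m1 + 1) = (m1 * a' + m2 * c') * a + (m1 * b' + m2 * d') * c
                            - m2 * (c' * a + d' * c) by rewrite /m1 /m2; nc_ring.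
  by rewrite NB1 NB2 BA3 !mul0r mulr0 addr0 subrr.
have N2' : (m1 + 1) * m2 = 0.
  have -> : (m1 + 1) * m2 = (m1 * a' + m2 * c') * b + (m1 * b' + m2 * d') * d
                            - m2 * (c' * b + d' * d - 1) by rewrite /m1 /m2; nc_ring.
  by rewrite NB1 NB2 BA4 subrr !mul0r mulr0 addr0 subrr.
have [m1_0 m2_0] : m1 = 0 /\ m2 = 0.
  case: (R_dom N2) => [m1_0 | m1_N1]; first by move: N2'; rewrite m1_0 add0r mul1r.
  have m1E : m1 = -1 by rewrite -[m1](addrK 1) m1_N1 sub0r.
  have a'E : a' = m2 * c'.
    by move/eqP: NB1; rewrite m1E mulN1r addrC subr_eq0 => /eqP.
  have b'E : b' = m2 * d'.
    by move/eqP: NB2; rewrite m1E mulN1r addrC subr_eq0 => /eqP.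
  have AB1' : (a * m2 + b) * c' = 1 by rewrite mulrDl -mulrA -a'E.
  have AB2' : (a * m2 + b) * d' = 0 by rewrite mulrDl -mulrA -b'E.
  have d'0 : d' = 0.
    case: (R_dom AB2') => // am2b0; move: AB1'.
    by rewrite am2b0 mul0r => /eqP; rewrite eq_sym oner_eq0.
  by move: AB4; rewrite b'E d'0 !mulr0 addr0 => /eqP; rewrite eq_sym oner_eq0.
split=> //; split=> //.
by apply/eqP; rewrite -subr_eq0 -/m1 m1_0.
Qed.
End Domain.

Section RightBezoutDomain.
Variable R : nzRingType.
Hypothesis R_dom : is_domain R.
Hypothesis R_rbez : rbezout2 R.

(* The completion is [[p, q], [-r, s]], with inverse [[X, u], [Y, g]], where
   [g = Y p al + (1 - Y q) be] is a right gcd of [Y p = g r] and [1 - Y q = g s]. *)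
Lemma unimodular_row_completion (p q X Y : R) : p * X + q * Y = 1 ->
  exists c d a' b' c' d', inv2 p q c d a' b' c' d'.
Proof.
move=> pq1.
have [p0 | pn0] := eqVneq p 0.
  have qY1 : q * Y = 1 by rewrite -pq1 p0 mul0r add0r.
  exists 1, 0, 0, 1, Y, 0; apply: (inv2_of_mulr1 R_dom).
  - by split; rewrite ?p0 ?mul0r ?mulr0 ?add0r ?addr0 ?mulr1.
  - by rewrite p0 mulr0 mul0r addr0.
  - by rewrite mulr0 addr0 (dom_mulr1C R_dom).
have [g [al [be [r [s [gE Yp_E Yq_E]]]]]] := R_rbez (Y * p) (1 - Y * q).
have gn0 : g != 0.
  apply: contra_neq pn0 => g0; move: Yp_E Yq_E; rewrite g0 !mul0r => /R_dom[] // Y0.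
  by move/eqP; rewrite Y0 mul0r subr0 oner_eq0.
(* [u] is chosen so that [p u + q g = 0] once [q Y] is replaced by [1 - p X]. *)
set u := - al + X * p * al - X * q * be.
have pu_qg : p * u + q * g = 0.
  have -> : p * u + q * g = (p * X + q * Y - 1) * (p * al - q * be)
                            + (q * g - q * (Y * p * al + (1 - Y * q) * be)) by rewrite /u; nc_ring.
  by rewrite pq1 subrr mul0r add0r gE subrr.
have rX_sY : - r * X + s * Y = 0.
  apply: (dom_mulrI R_dom gn0); rewrite mulr0.
  have -> : g * (- r * X + s * Y) = - ((g * r) * X) + (g * s) * Y by nc_ring.
  rewrite -Yp_E -Yq_E.
  have -> : - (Y * p * X) + (1 - Y * q) * Y = Y - Y * (p * X + q * Y) by nc_ring.
  by rewrite pq1 mulr1 subrr.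
have ru_sg : - r * u + s * g = 1.
  apply: (dom_mulrI R_dom gn0); rewrite mulr1.
  have -> : g * (- r * u + s * g) = - ((g * r) * u) + (g * s) * g by nc_ring.
  rewrite -Yp_E -Yq_E.
  have -> : - (Y * p * u) + (1 - Y * q) * g = g - Y * (p * u + q * g) by nc_ring.
  by rewrite pu_qg mulr0 subr0.
exists (- r), s, X, u, Y, g; apply: (inv2_of_mulr1 R_dom) => //.
- by rewrite mulrN -Yp_E subrr.
- by rewrite -Yq_E addrC subrK.
Qed.

Lemma row2_reduction (a b : R) : exists g x y z w,
  [/\ invertible2 x y z w, a * x + b * z = g & a * y + b * w = 0].
Proof.
have [g [x [y [a1 [b1 [gE aE bE]]]]]] := R_rbez a b.
have [g0 | gn0] := eqVneq g 0.
  exists 0, 1, 0, 0, 1; rewrite aE bE g0 !mul0r; split; rewrite ?mulr0 ?add0r //.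
  by exists 1, 0, 0, 1; split; split; rewrite ?mul0r ?mulr0 ?add0r ?addr0 ?mulr1.
have : a1 * x + b1 * y = 1.
  by apply: (dom_mulrI R_dom gn0); rewrite mulr1 {2}gE aE bE; nc_ring.
move=> /unimodular_row_completion [c [d [x' [y' [z' [w' Hinv]]]]]].
have [[a1x' _ _ _] _] := Hinv; have [[_ a1y' _ _] _] := Hinv.
exists g, x', y', z', w'; split.
- by exists a1, b1, c, d; apply: inv2_sym.
- by rewrite aE bE -!mulrA -mulrDr a1x' mulr1.
- by rewrite aE bE -!mulrA -mulrDr a1y' mulr0.
Qed.
Lemma rgcd3_coprime (a b c : R) : c != 0 -> exists d a1 b1 c1 u v w,
  [/\ d != 0, a = d * a1, b = d * b1, c = d * c1 & a1 * u + b1 * v + c1 * w = 1].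
Proof.
move=> cn0.
have [g [x1 [y1 [ga [gb [gE aE bE]]]]]] := R_rbez a b.
have [d [x2 [y2 [dg [c1 [dE gE' cE]]]]]] := R_rbez g c.
have dn0 : d != 0 by apply: contra_neq cn0 => d0; rewrite cE d0 mul0r.
exists d, (dg * ga), (dg * gb), c1, (x1 * x2), (y1 * x2), y2.
split=> //; [by rewrite mulrA -gE' | by rewrite mulrA -gE' |].
apply: (dom_mulrI R_dom dn0); rewrite mulr1.
have -> : d * (dg * ga * (x1 * x2) + dg * gb * (y1 * x2) + c1 * y2)
          = (d * dg * ga * x1 + d * dg * gb * y1) * x2 + d * c1 * y2 by nc_ring.
by rewrite -gE' -aE -bE -gE -cE -dE.
Qed.
End RightBezoutDomain.

Lemma col2_reduction (R : nzRingType) : is_domain R -> rbezout2 R^c ->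
  forall a b : R, exists g x y z w,
  [/\ invertible2 x y z w, x * a + y * b = g & z * a + w * b = 0].
Proof.
move=> R_dom R_lbez a b.
have [g [x [y [z [w [[x' [y' [z' [w' [[I1 I2 I3 I4] [I5 I6 I7 I8]]]]]] E1 E2]]]]]] :=
  row2_reduction (is_domain_conv R_dom) R_lbez a b.
by exists g, x, z, y, w; split=> //; exists x', z', y', w'; split; split.
Qed.

Definition dvd (R : nzRingType) (d x : R) := exists y, x = d * y.

Section Divisibility.
Variable R : nzRingType.
Implicit Types d e x y : R.

Lemma dvd0 d : dvd d 0. Proof. by exists 0; rewrite mulr0. Qed.
Lemma dvdrr d : dvd d d. Proof. by exists 1; rewrite mulr1. Qed.
Lemma dvd0_eq x : dvd 0 x -> x = 0. Proof. by move=> [y ->]; rewrite mul0r. Qed.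

Lemma dvdD d x y : dvd d x -> dvd d y -> dvd d (x + y).
Proof. by move=> [u ->] [v ->]; exists (u + v); rewrite mulrDr. Qed.

Lemma dvdMr d x r : dvd d x -> dvd d (x * r).
Proof. by move=> [u ->]; exists (u * r); rewrite mulrA. Qed.

Lemma dvd_trans d e x : dvd d e -> dvd e x -> dvd d x.
Proof. by move=> [u ->] [v ->]; exists (u * v); rewrite mulrA. Qed.

Lemma dvd_sum d n (F : 'I_n -> R) : (forall i, dvd d (F i)) -> dvd d (\sum_(i < n) F i).
Proof. by move=> dF; apply: big_ind => //; [exact: dvd0 | exact: dvdD]. Qed.

Hypothesis R_inv : invariant_ring R.

Lemma invariant_mulr_swap (a r : R) : exists r', a * r = r' * a.
Proof.
have [-> | an0] := eqVneq a 0; first by exists 0; rewrite mul0r mulr0.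
by have [_ [swap _]] := R_inv an0; exact: swap.
Qed.

Lemma invariant_mull_swap (a r : R) : exists r', r * a = a * r'.
Proof.
have [-> | an0] := eqVneq a 0; first by exists 0; rewrite mul0r mulr0.
by have [_ [_ swap]] := R_inv an0; exact: swap.
Qed.

Lemma dvdMl d x r : dvd d x -> dvd d (r * x).
Proof.
move=> [u ->]; have [r' rdE] := invariant_mull_swap d r.
by exists (r' * u); rewrite mulrA rdE mulrA.
Qed.

Lemma dvd_ldvd d x : dvd d x -> exists y, x = y * d.
Proof. by move=> [u ->]; exact: invariant_mulr_swap. Qed.

Lemma in_ideal2_dvd d e x : dvd d e -> in_ideal2 [:: e] x -> dvd d x.
Proof.
move=> de [n [u [v [k ->]]]]; apply: dvd_sum => i.
by apply/dvdMr/dvdMl; case: (k i) => [[|//] ?].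
Qed.

Lemma in_ideal2_rideal (s t x : R) : in_ideal2 [:: s; t] x -> exists X Y, x = s * X + t * Y.
Proof.
move=> [n [u [v [k ->]]]].
apply: (big_ind (fun z => exists X Y, z = s * X + t * Y)).
- by exists 0, 0; rewrite !mulr0 addr0.
- move=> _ _ [X [Y ->]] [X' [Y' ->]].
  by exists (X + X'), (Y + Y'); rewrite !mulrDr; nc_ring.
move=> i _; case: (k i) => [[|[|//]] ?] /=.
  by have [u' ->] := invariant_mull_swap s (u i); exists (u' * v i), 0; rewrite mulr0 addr0 mulrA.
by have [u' ->] := invariant_mull_swap t (u i); exists 0, (u' * v i); rewrite mulr0 add0r mulrA.
Qed.
End Divisibility.

Section SimpleRange2.
Variable R : nzRingType.
Hypotheses (R_dom : is_domain R) (R_bez : bezout R).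
Hypotheses (R_inv : invariant_ring R) (R_sr : simple_range2 R).

(* Write [a = d a1], [b = d b1], [c = d c1] with [d] a right gcd. Simple range 2
   gives [p], [q] with [(p a1 + q b1, p c1)] unimodular, and invariance moves
   [p], [q] to the left of [d]: the first row of the equivalent matrix becomes
   [d (p a1 + q b1, p c1)], which a second invertible matrix sends to [(d, 0)]. *)
Lemma simple_range2_corner (a b c : R) : c != 0 ->
  exists d x0 x1 x2 x3 y0 y1 y2 y3,
  [/\ invertible2 x0 x1 x2 x3, invertible2 y0 y1 y2 y3,
      (x0 * a + x1 * b) * y0 + x0 * c * y2 = d & [/\ dvd d a, dvd d b & dvd d c]].
Proof.
move=> cn0; have rbez := bezout_rbezout2 R_bez.
have [d [a1 [b1 [c1 [u [v [w [dn0 aE bE cE abc1]]]]]]]] := rgcd3_coprime R_dom rbez a b cn0.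
have c1n0 : c1 != 0 by apply: contra_neq cn0 => c10; rewrite cE c10 mulr0.
have [p [q pq_gen]] : exists p q : R, forall x, in_ideal2 [:: p * a1 + q * b1; p * c1] x.
  apply: R_sr => // x; exists 3, (fun _ => 1).
  exists (fun i : 'I_3 => nth 0 [:: u * x; v * x; w * x] i), id.
  by rewrite !big_ord_recl big_ord0 /= !mul1r addr0 -[x]mul1r -{1}abc1; nc_ring.
have [X [Y XY1]] := in_ideal2_rideal R_inv (pq_gen 1).
have [p' p'E] := invariant_mulr_swap R_inv d p.
have [q' q'E] := invariant_mulr_swap R_inv d q.
have [X' X'E] := invariant_mulr_swap R_inv d (a1 * X + c1 * Y).
have [Y' Y'E] := invariant_mulr_swap R_inv d (b1 * X).
have pq'1 : p' * X' + q' * Y' = 1.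
  apply: (dom_mulIr R_dom dn0); rewrite mul1r mulrDl -!mulrA -X'E -Y'E !mulrA -p'E -q'E.
  by rewrite -[d in RHS]mulr1 XY1; nc_ring.
have [x2' [x3' [x0'' [x1'' [x2'' [x3'' Xinv]]]]]] :=
  unimodular_row_completion R_dom rbez pq'1.
have [s2 [s3 [y0 [y1' [y2' [y3 Yinv]]]]]] :=
  unimodular_row_completion R_dom rbez (esym XY1).
have [[sy1 _ _ _] _] := Yinv.
exists d, p', q', x2', x3', y0, y1', y2', y3; split.
- by exists x0'', x1'', x2'', x3''.
- by exists (p * a1 + q * b1), (p * c1), s2, s3; apply: inv2_sym.
- rewrite aE bE cE !mulrA -p'E -q'E.
  have -> : (d * p * a1 + d * q * b1) * y0 + d * p * c1 * y2'
            = d * ((p * a1 + q * b1) * y0 + p * c1 * y2') by nc_ring.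
  by rewrite sy1 mulr1.
- by split; [exists a1 | exists b1 | exists c1].
Qed.
End SimpleRange2.

Section MatrixOps.
Variable R : nzRingType.

Lemma invertible_mul m (P Q : 'M[R]_m) :
  invertible_mx P -> invertible_mx Q -> invertible_mx (P *m Q).
Proof.
move=> [P' [PP' P'P]] [Q' [QQ' Q'Q]]; exists (Q' *m P'); split.
  by rewrite mulmxA -(mulmxA P) QQ' mulmx1 PP'.
by rewrite mulmxA -(mulmxA Q') P'P mulmx1 Q'Q.
Qed.

Lemma invertible_1 m : invertible_mx (1%:M : 'M[R]_m).
Proof. by exists 1%:M; rewrite mulmx1. Qed.

Definition blk2 {k} (a b c d : R) : 'M[R]_(k.+2) :=
  \matrix_(i, j)
    if (i : nat) == 0%N then
      (if (j : nat) == 0%N then a else if (j : nat) == 1%N then b else 0)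
    else if (i : nat) == 1%N then
      (if (j : nat) == 0%N then c else if (j : nat) == 1%N then d else 0)
    else (i == j)%:R.

Lemma mul_blk2_mx k n (a b c d : R) (A : 'M[R]_(k.+2, n)) i j :
  (blk2 a b c d *m A) i j =
  if (i : nat) == 0%N then a * A ord0 j + b * A (lift ord0 ord0) j
  else if (i : nat) == 1%N then c * A ord0 j + d * A (lift ord0 ord0) j else A i j.
Proof.
case: ifP => [i0 | i0]; last case: ifP => [i1 | i1].
- rewrite mxE 2!big_ord_recl !mxE i0 /= big1 ?addr0 // => l _.
  by rewrite mxE i0 !lift0 mul0r.
- rewrite mxE 2!big_ord_recl !mxE i0 i1 /= big1 ?addr0 // => l _.
  by rewrite mxE i0 i1 !lift0 mul0r.
- rewrite -[A i j](congr1 (fun M : 'M[R]_(k.+2, n) => M i j) (mul1mx A)) !mxE.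
  by apply: eq_bigr => l _; rewrite !mxE i0 i1.
Qed.

Lemma mul_mx_blk2 k m (a b c d : R) (A : 'M[R]_(m, k.+2)) i j :
  (A *m blk2 a b c d) i j =
  if (j : nat) == 0%N then A i ord0 * a + A i (lift ord0 ord0) * c
  else if (j : nat) == 1%N then A i ord0 * b + A i (lift ord0 ord0) * d else A i j.
Proof.
case: ifP => [j0 | j0]; last case: ifP => [j1 | j1].
- rewrite mxE 2!big_ord_recl !mxE j0 /= big1 ?addr0 // => l _.
  rewrite mxE !lift0 /=; case: eqP => [lj | _]; last by rewrite mulr0.
  by move: j0; rewrite -lj !lift0.
- rewrite mxE 2!big_ord_recl !mxE j0 j1 /= big1 ?addr0 // => l _.
  rewrite mxE !lift0 /=; case: eqP => [lj | _]; last by rewrite mulr0.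
  by move: j1; rewrite -lj !lift0.
- rewrite -[A i j](congr1 (fun M : 'M[R]_(m, k.+2) => M i j) (mulmx1 A)) !mxE.
  apply: eq_bigr => l _; rewrite !mxE j0 j1; congr (_ * _).
  case: ifP => [/eqP l0 | _]; last case: ifP => [/eqP l1 | _] //.
  all: case: eqP => // lj.
  + by move: j0; rewrite -lj l0.
  + by move: j1; rewrite -lj l1.
Qed.

Lemma blk2_mul k (a b c d a' b' c' d' : R) :
  blk2 a b c d *m blk2 a' b' c' d' =
  blk2 (k := k) (a * a' + b * c') (a * b' + b * d') (c * a' + d * c') (c * b' + d * d').
Proof.
apply/matrixP => i j; rewrite mul_blk2_mx !mxE /=.
by case: i => [[|[|i]] ?] /=; case: j => [[|[|j]] ?] //=; rewrite ?mulr0 ?addr0.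
Qed.

Lemma blk2_1 k : blk2 (k := k) 1 0 0 1 = 1%:M.
Proof.
apply/matrixP => i j; rewrite !mxE.
by case: i => [[|[|i]] ?] /=; case: j => [[|[|j]] ?].
Qed.

Lemma invertible_blk2 k (a b c d : R) :
  invertible2 a b c d -> invertible_mx (blk2 (k := k) a b c d).
Proof.
move=> [a' [b' [c' [d' [[I1 I2 I3 I4] [I5 I6 I7 I8]]]]]]; exists (blk2 a' b' c' d').
by rewrite !blk2_mul I1 I2 I3 I4 I5 I6 I7 I8 blk2_1.
Qed.

(* [lift1 P] is the block-diagonal matrix [1 (+) P]. *)
Definition lift1 n (P : 'M[R]_n) : 'M[R]_(n.+1) :=
  \matrix_(i, j) match unlift ord0 i, unlift ord0 j with
                 | Some i', Some j' => P i' j'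
                 | _, _ => (i == j)%:R
                 end.

Definition dropr m n (A : 'M[R]_(m.+1, n)) : 'M[R]_(m, n) := \matrix_(i, j) A (lift ord0 i) j.
Definition dropc m n (A : 'M[R]_(m, n.+1)) : 'M[R]_(m, n) := \matrix_(i, j) A i (lift ord0 j).

Lemma mul_lift1_mx0 n p (P : 'M[R]_n) (A : 'M[R]_(n.+1, p)) j :
  (lift1 P *m A) ord0 j = A ord0 j.
Proof.
rewrite mxE big_ord_recl !mxE unlift_none eqxx mul1r big1 ?addr0 // => l _.
by rewrite mxE unlift_none mul0r.
Qed.

Lemma mul_lift1_mxS n p (P : 'M[R]_n) (A : 'M[R]_(n.+1, p)) i j :
  (lift1 P *m A) (lift ord0 i) j = (P *m dropr A) i j.
Proof.
rewrite mxE big_ord_recl !mxE liftK unlift_none mul0r add0r.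
by apply: eq_bigr => l _; rewrite !mxE !liftK.
Qed.

Lemma mul_mx_lift10 n p (Q : 'M[R]_n) (A : 'M[R]_(p, n.+1)) i :
  (A *m lift1 Q) i ord0 = A i ord0.
Proof.
rewrite mxE big_ord_recl !mxE unlift_none eqxx mulr1 big1 ?addr0 // => l _.
by rewrite mxE liftK unlift_none mulr0.
Qed.

Lemma mul_mx_lift1S n p (Q : 'M[R]_n) (A : 'M[R]_(p, n.+1)) i j :
  (A *m lift1 Q) i (lift ord0 j) = (dropc A *m Q) i j.
Proof.
rewrite mxE big_ord_recl !mxE liftK unlift_none mulr0 add0r.
by apply: eq_bigr => l _; rewrite !mxE !liftK.
Qed.

Lemma lift1_mul n (P Q : 'M[R]_n) : lift1 P *m lift1 Q = lift1 (P *m Q).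
Proof.
apply/matrixP => i j; case: (unliftP ord0 i) => [i'|] ->; last first.
  by rewrite mul_lift1_mx0 !mxE unlift_none.
rewrite mul_lift1_mxS; case: (unliftP ord0 j) => [j'|] ->.
  by rewrite !mxE !liftK !mxE; apply: eq_bigr => l _; rewrite !mxE !liftK.
by rewrite !mxE liftK unlift_none big1 // => l _; rewrite !mxE liftK unlift_none mulr0.
Qed.

Lemma lift1_1 n : lift1 (1%:M : 'M[R]_n) = 1%:M.
Proof.
apply/matrixP => i j; rewrite !mxE.
case: (unliftP ord0 i) => [i'|] ->; case: (unliftP ord0 j) => [j'|] ->;
  rewrite ?liftK ?unlift_none //.
by rewrite !mxE (inj_eq lift_inj).
Qed.

Lemma invertible_lift1 n (P : 'M[R]_n) : invertible_mx P -> invertible_mx (lift1 P).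
Proof. by move=> [P' [PP' P'P]]; exists (lift1 P'); rewrite !lift1_mul PP' P'P lift1_1. Qed.

Lemma dropc_mull m n p (P : 'M[R]_(m, n)) (A : 'M[R]_(n, p.+1)) :
  dropc (P *m A) = P *m dropc A.
Proof. by apply/matrixP => i j; rewrite !mxE; apply: eq_bigr => l _; rewrite !mxE. Qed.

Lemma dropr_mulr m n p (A : 'M[R]_(m.+1, n)) (Q : 'M[R]_(n, p)) :
  dropr (A *m Q) = dropr A *m Q.
Proof. by apply/matrixP => i j; rewrite !mxE; apply: eq_bigr => l _; rewrite !mxE. Qed.

Lemma dropc_mulr_lift1 m n (A : 'M[R]_(m, n.+1)) (Q : 'M[R]_n) :
  dropc (A *m lift1 Q) = dropc A *m Q.
Proof. by apply/matrixP => i j; rewrite [LHS]mxE mul_mx_lift1S. Qed.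

(* [col_elim c] (resp. [row_elim e]) adds [c i] times the first row to row [i]
   (resp. [e j] times the first column to column [j]), for [i], [j] nonzero. *)
Definition col_elim m (c : 'I_(m.+1) -> R) : 'M[R]_(m.+1) :=
  \matrix_(i, j) if i == j then 1 else if j == ord0 then c i else 0.
Definition row_elim n (e : 'I_(n.+1) -> R) : 'M[R]_(n.+1) :=
  \matrix_(i, j) if i == j then 1 else if i == ord0 then e j else 0.

Lemma mul_col_elim m p (c : 'I_(m.+1) -> R) (A : 'M[R]_(m.+1, p)) i j :
  (col_elim c *m A) i j = A i j + (if i == ord0 then 0 else c i * A ord0 j).
Proof.
rewrite mxE big_ord_recl !mxE; case: (unliftP ord0 i) => [i'|] -> /=.
  rewrite (bigD1 i') //= !mxE eqxx mul1r big1 ?addr0 => [|l li'].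
    by rewrite addrC.
  by rewrite !mxE (inj_eq lift_inj) eq_sym (negPf li') lift_eqF mul0r.
by rewrite mul1r big1 ?addr0 // => l _; rewrite mxE (eq_sym ord0) lift_eqF mul0r.
Qed.

Lemma mul_row_elim m p (e : 'I_(p.+1) -> R) (A : 'M[R]_(m, p.+1)) i j :
  (A *m row_elim e) i j = A i j + (if j == ord0 then 0 else A i ord0 * e j).
Proof.
rewrite mxE big_ord_recl !mxE; case: (unliftP ord0 j) => [j'|] -> /=.
  rewrite (bigD1 j') //= !mxE eqxx mulr1 big1 ?addr0 => [|l lj'].
    by rewrite addrC.
  by rewrite !mxE (inj_eq lift_inj) (negPf lj') lift_eqF mulr0.
by rewrite mulr1 big1 ?addr0 // => l _; rewrite mxE lift_eqF mulr0.
Qed.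

Lemma col_elim_mulN m (c c' : 'I_(m.+1) -> R) :
  (forall i, c' i = - c i) -> col_elim c *m col_elim c' = 1%:M.
Proof.
move=> c'E; apply/matrixP => i j; rewrite mul_col_elim !mxE.
case: (unliftP ord0 i) => [i'|] ->; case: (unliftP ord0 j) => [j'|] ->;
  rewrite ?eqxx ?lift_eqF ?(eq_sym ord0) ?lift_eqF ?(inj_eq lift_inj) /=.
all: rewrite ?mulr0 ?addr0 ?mulr1 ?c'E ?addNr ?addrN //.
by case: (i' == j').
Qed.

Lemma row_elim_mulN n (e e' : 'I_(n.+1) -> R) :
  (forall j, e' j = - e j) -> row_elim e *m row_elim e' = 1%:M.
Proof.
move=> e'E; apply/matrixP => i j; rewrite mul_row_elim !mxE.
case: (unliftP ord0 i) => [i'|] ->; case: (unliftP ord0 j) => [j'|] ->;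
  rewrite ?eqxx ?lift_eqF ?(eq_sym ord0) ?lift_eqF ?(inj_eq lift_inj) /=.
all: rewrite ?mul0r ?addr0 ?mul1r ?e'E ?addNr ?addrN //.
by case: (i' == j').
Qed.

Lemma invertible_col_elim m (c : 'I_(m.+1) -> R) : invertible_mx (col_elim c).
Proof.
by exists (col_elim (fun i => - c i)); split; apply: col_elim_mulN => // i; rewrite opprK.
Qed.

Lemma invertible_row_elim n (e : 'I_(n.+1) -> R) : invertible_mx (row_elim e).
Proof.
by exists (row_elim (fun j => - e j)); split; apply: row_elim_mulN => // j; rewrite opprK.
Qed.
End MatrixOps.

Definition equiv_to (R : nzRingType) m n (Pr : 'M[R]_(m, n) -> Prop) (A : 'M[R]_(m, n)) :=
  exists P Q, [/\ invertible_mx P, invertible_mx Q & Pr (P *m A *m Q)].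

Lemma equiv_to_mul (R : nzRingType) m n (Pr : 'M[R]_(m, n) -> Prop) A P0 Q0 :
  invertible_mx P0 -> invertible_mx Q0 -> equiv_to Pr (P0 *m A *m Q0) -> equiv_to Pr A.
Proof.
move=> IP0 IQ0 [P [Q [IP IQ PrB]]].
exists (P *m P0), (Q0 *m Q); split; try exact: invertible_mul.
by rewrite !mulmxA in PrB *.
Qed.

Lemma equiv_to_trans (R : nzRingType) m n (Pr Pr' : 'M[R]_(m, n) -> Prop) A :
  (forall B, Pr B -> equiv_to Pr' B) -> equiv_to Pr A -> equiv_to Pr' A.
Proof. by move=> PrPr' [P [Q [IP IQ /PrPr' PrB]]]; exact: equiv_to_mul IP IQ PrB. Qed.

Definition corner_divides (R : nzRingType) m n (A : 'M[R]_(m.+1, n.+1)) :=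
  forall i j, dvd (A ord0 ord0) (A i j).

Definition cleared (R : nzRingType) m n (A : 'M[R]_(m.+1, n.+1)) :=
  [/\ forall j, j != ord0 -> A ord0 j = 0, forall i, i != ord0 -> A i ord0 = 0
    & corner_divides A].

Section Reduction.
Variable R : nzRingType.
Hypotheses (R_dom : is_domain R) (R_bez : bezout R).
Hypotheses (R_inv : invariant_ring R) (R_sr : simple_range2 R).

Lemma dvd_mulmx (d : R) m n p q (P : 'M[R]_(m, n)) (A : 'M[R]_(n, p)) (Q : 'M[R]_(p, q)) :
  (forall i j, dvd d (A i j)) -> forall i j, dvd d ((P *m A *m Q) i j).
Proof.
move=> dA i j; rewrite mxE; apply: dvd_sum => k; apply: dvdMr.
by rewrite mxE; apply: dvd_sum => l; apply: dvdMl.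
Qed.

Lemma col_reduction m n (A : 'M[R]_(m.+1, n.+1)) :
  exists P, invertible_mx P /\ forall i, i != ord0 -> (P *m A) i ord0 = 0.
Proof.
elim: m A => [|m IH] A.
  by exists 1%:M; split=> [|i]; [exact: invertible_1 | rewrite ord1 eqxx].
have [P [IP PA0]] := IH (dropr A).
have R_lbez := bezout_rbezout2 (bezout_conv R_bez).
have [g [x [y [z [w [Ixyzw _ zw0]]]]]] :=
  col2_reduction R_dom R_lbez (A ord0 ord0) ((P *m dropr A) ord0 ord0).
exists (blk2 x y z w *m lift1 P); split.
  by apply: invertible_mul; [exact: invertible_blk2 | exact: invertible_lift1].
move=> i i0; rewrite -mulmxA mul_blk2_mx.
case: (unliftP ord0 i) i0 => [i'|] -> //; rewrite lift0 /= => _.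
case: (unliftP ord0 i') => [i''|] ->.
  by rewrite lift0 /= mul_lift1_mxS PA0 // lift_eqF.
by rewrite /= mul_lift1_mx0 mul_lift1_mxS.
Qed.

Lemma corner_divides_cleared m n (B : 'M[R]_(m.+1, n.+1)) :
  corner_divides B -> equiv_to (@cleared R m n) B.
Proof.
move=> dB; set d := B ord0 ord0.
have cP i : exists c, B i ord0 == c * d by have [c ->] := dvd_ldvd R_inv (dB i ord0); exists c.
have zP j : exists z, B ord0 j == d * z by have [z ->] := dB ord0 j; exists z.
pose c i := xchoose (cP i); pose z j := xchoose (zP j).
have cE i : B i ord0 = c i * d by apply/eqP; exact: xchooseP (cP i).
have zE j : B ord0 j = d * z j by apply/eqP; exact: xchooseP (zP j).
exists (col_elim (fun i => - c i)), (row_elim (fun j => - z j)).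
split; [exact: invertible_col_elim | exact: invertible_row_elim |].
have CE i j : (col_elim (fun i => - c i) *m B *m row_elim (fun j => - z j)) i j =
   B i j + (if i == ord0 then 0 else - c i * B ord0 j)
   + (if j == ord0 then 0 else (B i ord0 + (if i == ord0 then 0 else - c i * d)) * - z j).
  by rewrite mul_row_elim !mul_col_elim.
split.
- by move=> j /negPf j0; rewrite CE eqxx j0 !addr0 zE mulrN addrN.
- by move=> i /negPf i0; rewrite CE eqxx i0 addr0 cE mulNr addrN.
move=> i j; rewrite CE eqxx !addr0 -/d CE.
apply: dvdD; first apply: dvdD; first exact: dB.
- by case: ifP => _; [exact: dvd0 | apply/dvdMl/dB].
- case: ifP => _; first exact: dvd0.
  by apply/dvdMr/dvdD; [exact: dB | case: ifP => _; [exact: dvd0 | apply/dvdMl/dvdrr]].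
Qed.

Lemma corner_reduction_row n (A : 'M[R]_(1, n.+2)) :
  (forall j, j != ord0 -> A ord0 (lift ord0 j) = 0) -> equiv_to (@corner_divides R 0 n.+1) A.
Proof.
move=> A0.
have [g [x [y [z [w [Ixyzw gE g0]]]]]] :=
  row2_reduction R_dom (bezout_rbezout2 R_bez) (A ord0 ord0) (A ord0 (lift ord0 ord0)).
exists 1%:M, (blk2 x y z w); split; [exact: invertible_1 | exact: invertible_blk2 |].
have C00 : (A *m blk2 x y z w) ord0 ord0 = g by rewrite mul_mx_blk2.
rewrite mul1mx => i j; rewrite (ord1 i) C00.
case: (unliftP ord0 j) => [j'|] ->; last by rewrite C00; exact: dvdrr.
case: (unliftP ord0 j') => [j''|] ->; rewrite mul_mx_blk2 !lift0 /=.
  by rewrite A0 ?lift_eqF //; exact: dvd0.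
by rewrite g0; exact: dvd0.
Qed.

Lemma corner_reduction_zero m n (A : 'M[R]_(m.+1, n.+2)) :
  (forall i j, A i (lift ord0 j) = 0) -> equiv_to (@corner_divides R m n.+1) A.
Proof.
move=> A0; have [P [IP PA0]] := col_reduction A.
exists P, 1%:M; split; [exact: IP | exact: invertible_1 |]; rewrite mulmx1 => i j.
case: (unliftP ord0 j) => [j'|] ->.
  by rewrite [X in dvd _ X]mxE big1 => [|k _]; [exact: dvd0 | rewrite A0 mulr0].
by have [-> | /PA0 ->] := eqVneq i ord0; [exact: dvdrr | exact: dvd0].
Qed.

Lemma corner2_reduction m n (A : 'M[R]_(m.+2, n.+2)) :
  A ord0 (lift ord0 ord0) != 0 -> A (lift ord0 ord0) (lift ord0 ord0) = 0 ->
  (forall d, dvd d (A ord0 ord0) -> dvd d (A (lift ord0 ord0) ord0) ->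
     dvd d (A ord0 (lift ord0 ord0)) -> forall i j, dvd d (A i j)) ->
  equiv_to (@corner_divides R m.+1 n.+1) A.
Proof.
move=> en0 A11 Adiv.
have [d [x0 [x1 [x2 [x3 [y0 [y1 [y2 [y3 [IX IY dE [da db de]]]]]]]]]]] :=
  simple_range2_corner R_dom R_bez R_inv R_sr (A ord0 ord0) (A (lift ord0 ord0) ord0) en0.
exists (blk2 x0 x1 x2 x3), (blk2 y0 y1 y2 y3).
split; [exact: invertible_blk2 | exact: invertible_blk2 |] => i j.
have -> : (blk2 x0 x1 x2 x3 *m A *m blk2 y0 y1 y2 y3) ord0 ord0 = d.
  by rewrite mul_mx_blk2 /= !mul_blk2_mx /= A11 mulr0 addr0.
by apply: dvd_mulmx => i0 j0; apply: Adiv.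
Qed.

Lemma corner_reduction_step m n (A : 'M[R]_(m.+1, n.+2)) :
  cleared (dropc A) -> equiv_to (@corner_divides R m n.+1) A.
Proof.
move=> [row0 col0 ediv].
have rowA j : j != ord0 -> A ord0 (lift ord0 j) = 0 by move/row0; rewrite mxE.
have colA i : i != ord0 -> A i (lift ord0 ord0) = 0 by move/col0; rewrite mxE.
have divA i j : dvd (A ord0 (lift ord0 ord0)) (A i (lift ord0 j)).
  by have := ediv i j; rewrite !mxE.
clear row0 col0 ediv; case: m A rowA colA divA => [|m] A rowA colA divA.
  exact: corner_reduction_row.
have [e0 | en0] := eqVneq (A ord0 (lift ord0 ord0)) 0.
  by apply: corner_reduction_zero => i j; apply: dvd0_eq; rewrite -e0.
(* Clearing the first column below its second entry leaves the corner
   [[a, e], [b, 0]] required by [corner2_reduction]. *)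
have [P [IP PA0]] := col_reduction (dropr A).
apply: (equiv_to_mul (invertible_lift1 IP) (invertible_1 _ _)); rewrite mulmx1.
have eA i j : dvd (A ord0 (lift ord0 ord0)) ((lift1 P *m A) i (lift ord0 j)).
  have -> : (lift1 P *m A) i (lift ord0 j) = (lift1 P *m dropc A *m 1%:M) i j.
    by rewrite mulmx1 -dropc_mull [RHS]mxE.
  by apply: dvd_mulmx => k l; rewrite mxE.
apply: corner2_reduction.
- by rewrite mul_lift1_mx0.
- by rewrite mul_lift1_mxS mxE big1 // => k _; rewrite mxE colA ?lift_eqF ?mulr0.
move=> d da db de i j; rewrite mul_lift1_mx0 in de.
case: (unliftP ord0 j) => [j'|] ->; first exact: dvd_trans de (eA i j').
case: (unliftP ord0 i) => [i'|] ->; last exact: da.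
have [-> | /PA0] := eqVneq i' ord0; first exact: db.
by rewrite -mul_lift1_mxS => ->; exact: dvd0.
Qed.

Lemma corner_reduction m n (A : 'M[R]_(m.+1, n.+1)) : equiv_to (@cleared R m n) A.
Proof.
elim: n m A => [|n IH] m A.
  have [P [IP PA0]] := col_reduction A.
  exists P, 1%:M; split; [exact: IP | exact: invertible_1 |]; rewrite mulmx1.
  split=> [j | i /PA0 // | i j]; first by rewrite ord1 eqxx.
  rewrite (ord1 j); have [-> | /PA0 ->] := eqVneq i ord0; [exact: dvdrr | exact: dvd0].
have [P [Q [IP IQ PAQ]]] := IH m (dropc A).
apply: (equiv_to_mul IP (invertible_lift1 IQ)).
apply: (equiv_to_trans (@corner_divides_cleared _ _)); apply: corner_reduction_step.
by rewrite dropc_mulr_lift1 dropc_mull.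
Qed.
End Reduction.

Definition DK_reducible (R : nzRingType) m n (A : 'M[R]_(m, n)) :=
  exists (P : 'M[R]_m) (Q : 'M[R]_n) (r : nat) (eps : nat -> R),
    [/\ invertible_mx P, invertible_mx Q, (r <= minn m n)%N &
    [/\
      (forall (i : 'I_m) (j : 'I_n),
          (P *m A *m Q) i j = if ((i : nat) == j) && (i < r)%N then eps i else 0),
      (forall i, (i < r)%N -> eps i != 0),
      (forall i, (i.+1 < r)%N -> forall x, in_ideal2 [:: eps i.+1] x ->
           (exists y, x = eps i * y) /\ (exists y, x = y * eps i)) &
      (forall i, (i.+1 < r)%N -> invariant_elt (eps i))]].

Section DKReduction.
Variable R : nzRingType.

Lemma DK_reducible_empty m n (A : 'M[R]_(m, n)) : m = 0%N \/ n = 0%N -> DK_reducible A.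
Proof.
move=> mn0; exists 1%:M, 1%:M, 0%N, (fun=> 0).
split; [exact: invertible_1 | exact: invertible_1 | by [] | split=> //].
move=> i j; exfalso.
by case: mn0 => mn0; [move: i (ltn_ord i) | move: j (ltn_ord j)]; rewrite mn0.
Qed.

Lemma DK_reducible_equiv m n (A : 'M[R]_(m, n)) P0 Q0 :
  invertible_mx P0 -> invertible_mx Q0 -> DK_reducible (P0 *m A *m Q0) -> DK_reducible A.
Proof.
move=> IP0 IQ0 [P [Q [r [eps [IP IQ rmn epsP]]]]].
exists (P *m P0), (Q0 *m Q), r, eps; split; try exact: invertible_mul; first exact: rmn.
by rewrite !mulmxA in epsP *.
Qed.

Hypothesis R_inv : invariant_ring R.

Lemma DK_reducible_cleared m n (B : 'M[R]_(m.+1, n.+1)) :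
  cleared B -> DK_reducible (dropr (dropc B)) -> DK_reducible B.
Proof.
move=> [row0 col0 dB] [P [Q [r [eps [IP IQ rmn [PBQ eps0 eps_dvd eps_inv]]]]]].
set d := B ord0 ord0 in dB.
have [d0 | dn0] := eqVneq d 0.
  exists 1%:M, 1%:M, 0%N, (fun=> 0).
  split; [exact: invertible_1 | exact: invertible_1 | by [] | split=> // i j].
  by rewrite mulmx1 mul1mx andbF; apply: dvd0_eq; rewrite -d0.
exists (lift1 P), (lift1 Q), r.+1, (fun k => if k is k'.+1 then eps k' else d).
split; [exact: invertible_lift1 | exact: invertible_lift1 | by rewrite minnSS ltnS |].
have d_dvd_eps0 : (0 < r)%N -> dvd d (eps 0).
  move=> r0; have [/= m0 n0] : (0 < m)%N /\ (0 < n)%N.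
    by move: rmn; rewrite leq_min => /andP[]; split; exact: leq_trans r0 _.
  have -> : eps 0 = (P *m dropr (dropc B) *m Q) (Ordinal m0) (Ordinal n0) by rewrite PBQ r0.
  by apply: dvd_mulmx => // i j; rewrite !mxE.
split.
- move=> i j; case: (unliftP ord0 j) => [j'|] ->.
    rewrite mul_mx_lift1S dropc_mull; case: (unliftP ord0 i) => [i'|] ->.
      by rewrite -mulmxA mul_lift1_mxS dropr_mulr mulmxA PBQ !lift0 eqSS ltnS.
    rewrite -mulmxA mul_lift1_mx0 mxE big1 //= => k _.
    by rewrite mxE row0 ?lift_eqF // mul0r.
  rewrite mul_mx_lift10; case: (unliftP ord0 i) => [i'|] ->; last by rewrite mul_lift1_mx0.
  rewrite mul_lift1_mxS lift0 /= mxE big1 // => k _.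
  by rewrite mxE col0 ?lift_eqF // mulr0.
- by case.
- case=> [|i] ri x; last exact: eps_dvd.
  move=> /(in_ideal2_dvd R_inv (d_dvd_eps0 ri)) dx.
  by split; [exact: dx | exact: dvd_ldvd].
- by case=> [|i] ri; [exact: R_inv | exact: eps_inv].
Qed.
End DKReduction.

Lemma DK_reducible_all (R : nzRingType) :
  is_domain R -> bezout R -> invariant_ring R -> simple_range2 R ->
  forall m n (A : 'M[R]_(m, n)), DK_reducible A.
Proof.
move=> R_dom R_bez R_inv R_sr; elim=> [|m IH] [|n] A; try (apply: DK_reducible_empty; tauto).
have [P [Q [IP IQ PAQ]]] := corner_reduction R_dom R_bez R_inv R_sr A.
apply: (DK_reducible_equiv IP IQ); apply: (DK_reducible_cleared R_inv PAQ).
exact: IH.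
Qed.

Theorem theorem3p7 (R : nzRingType) :
  is_domain R -> bezout R -> invariant_ring R -> simple_range2 R ->
  DK_elementary_divisor_ring R.
Proof. move=> R_dom R_bez R_inv R_sr m n A; exact: DK_reducible_all. Qed.
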